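(* Let $(X_j,Y_j,S_j)$, $j\in\mathbb{Z}$, be a FAIM process. Then for every $n\ge1$, \[\hat K_{n+1}\le\begin{cases}\psi(0)\,\hat K_n^2 & \text{if } B_{n+1}=0,\\ 2\hat K_n & \text{if } B_{n+1}=1,\end{cases}\] where $\psi(0)=\max_{a\in\mathcal{S}}1/\pi_0(a)$ and $\pi_0$ is the stationary distribution of the state chain.
   Context: FAIM process: $(X_j,Y_j,S_j)$, $j\in\mathbb{Z}$, is strictly stationary, $X_j\in\{0,1\}$, $Y_j$ takes values in a finite alphabet, $S_j$ in a finite set $\mathcal{S}$; the conditional law $P_{X_j,Y_j,S_j|S_{j-1}}$ does not depend on $j$; and conditioned on $S_{j-1}$, $\{X_k,Y_k,S_k\}_{k\ge j}$ is independent of $\{X_l,Y_l,S_{l-1}\}_{l<j}$. The state sequence $(S_j)$ is a homogeneous, finite-state, stationary, aperiodic and irreducible Markov chain. For binary $U$ and finite-valued $Q$, $K(U|Q)=\sum_q|P_{U,Q}(0,q)-P_{U,Q}(1,q)|$; conditioning on several variables means treating the tuple as the observation. Polarization setup: for $n\ge1$, $N=2^n$, $G_N=B_NG_2^{\otimes n}$ with $G_2=\begin{bmatrix}1&0\\1&1\end{bmatrix}$ and $B_N$ the bit-reversal permutation matrix (arithmetic modulo 2); $U_1^N=X_1^NG_N$, $Q_i=(U_1^{i-1},Y_1^N)$. Let $B_1,B_2,\dots$ be i.i.d. Bernoulli$(1/2)$ and, for each $n$, $i-1=\sum_{j=1}^nB_j2^{n-j}$. The boundary-state-informed total variation process is $\hat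 K_n=K(U_i|Q_i,S_N,S_0)$ (with $N=2^n$); $\hat K_{n+1}$ is defined in the same way with $n+1$ in place of $n$ and the same $B_1,B_2,\dots$. *)

From HB Require Import structures.
From mathcomp Require Import all_boot all_order all_algebra.
From mathcomp Require Import all_classical all_reals all_analysis.
Set Implicit Arguments. Unset Strict Implicit. Unset Printing Implicit Defensive.
Import Order.TTheory GRing.Theory Num.Theory.
Local Open Scope classical_set_scope.
Local Open Scope ring_scope.

(* G_2 = [[1,0],[1,1]] : entry (r,c), r,c in {0,1}, is 1 iff c <= r. *)
Definition G2 (r c : nat) : bool := (c <= r)%N.

(* Kronecker power G_2^{(x)n}, 0-indexed entries (r,c), r,c < 2^n:
   G_2^{(x)(n+1)} = G_2 (x) G_2^{(x)n}. *)
Fixpoint kronG2 (n : nat) (r c : nat) : bool :=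
  match n with
  | 0 => true
  | n'.+1 => G2 (r %/ 2 ^ n') (c %/ 2 ^ n') && kronG2 n' (r %% 2 ^ n') (c %% 2 ^ n')
  end.

Fixpoint bitrev (n r : nat) : nat :=
  match n with
  | 0 => 0
  | n'.+1 => (r %% 2) * 2 ^ n' + bitrev n' (r %/ 2)
  end.

(* G_N = B_N G_2^{(x)n}, B_N the bit-reversal permutation matrix:
   (B_N A)[r][c] = A[bitrev r][c]. 0-indexed entries. *)
Definition GN (n r c : nat) : bool := kronG2 n (bitrev n r) c.

Section FAIM.
Context {d : measure_display} {T : measurableType d} {R : realType}
  (P : probability T R).

Definition Pr (A : set T) : R := fine (P A).

(* total variation quantity K(U|Q) = sum_q |P(U=0,Q=q) - P(U=1,Q=q)|,
   the value 0 of a binary variable being represented by [false] *)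
Definition Kcond (U : T -> bool) (Qt : finType) (Q : T -> Qt) : R :=
  \sum_(q : Qt) `| Pr [set w | U w = false /\ Q w = q]
                 - Pr [set w | U w = true /\ Q w = q] |.

Context {Yt St : finType}
  (X : int -> T -> bool) (Y : int -> T -> Yt) (S : int -> T -> St).

Definition Zp (j : int) (w : T) : bool * Yt * St := (X j w, Y j w, S j w).

Definition win_ev (k : int) (m : nat) (f : 'I_m -> bool * Yt * St) : set T :=
  [set w | forall l : 'I_m, Zp (k + (l : nat)%:Z) w = f l].

Definition past_ev (j : int) (m : nat) (g : 'I_m -> bool * Yt * St) : set T :=
  [set w | forall l : 'I_m,
     let t := (j - (m : nat)%:Z + (l : nat)%:Z)%R in (X t w, Y t w, S (t - 1) w) = g l].

Definition Sev (j : int) (s : St) : set T := [set w | S j w = s].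

(* FAIM process (all random variables finite-valued, conditions on
   finite-dimensional cylinder events) *)
Definition FAIM : Prop :=
  [/\ [/\ (forall j b, measurable [set w | X j w = b]),
          (forall j y, measurable [set w | Y j w = y]) &
          (forall j s, measurable [set w | S j w = s])],
      (forall (k : int) (m : nat) (f : 'I_m -> bool * Yt * St),
          Pr (win_ev k f) = Pr (win_ev 0 f)),
  (* the conditional law P_{X_j,Y_j,S_j | S_{j-1}} does not depend on j *)
      (exists W : St -> bool * Yt * St -> R, forall (j : int) z s,
          Pr ([set w | Zp j w = z] `&` Sev (j - 1) s) = W s z * Pr (Sev (j - 1) s)) &
  (* conditioned on S_{j-1}, {Z_k}_{k>=j} indep. of {X_l,Y_l,S_{l-1}}_{l<j} *)
      (forall (j : int) (m1 m2 : nat) (f : 'I_m1 -> bool * Yt * St)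
              (g : 'I_m2 -> bool * Yt * St) (s : St),
          Pr (win_ev j f `&` past_ev j g `&` Sev (j - 1) s) * Pr (Sev (j - 1) s)
          = Pr (win_ev j f `&` Sev (j - 1) s) * Pr (past_ev j g `&` Sev (j - 1) s))].

Fixpoint Qpow (Q : St -> St -> R) (k : nat) (a b : St) : R :=
  match k with
  | 0 => (a == b)%:R
  | k'.+1 => \sum_(c : St) Qpow Q k' a c * Q c b
  end.

(* the state sequence is a homogeneous, finite-state, stationary, aperiodic
   and irreducible Markov chain *)
Definition state_chain : Prop :=
  (forall (k : int) (a : St), Pr (Sev k a) = Pr (Sev 0 a)) /\
  exists Q : St -> St -> R,
    [/\ (forall a b, 0 <= Q a b), (forall a, \sum_(b : St) Q a b = 1),
        (forall (j : int) (m : nat) (g : 'I_m -> St) (a b : St),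
           let past := [set w | forall l : 'I_m,
                          S (j - 1 - (m : nat)%:Z + (l : nat)%:Z)%R w = g l] in
           Pr (Sev j b `&` Sev (j - 1) a `&` past) = Q a b * Pr (Sev (j - 1) a `&` past)),
        (forall a b, exists k, 0 < Qpow Q k a b) &
        (* aperiodic: gcd {k >= 1 | Q^k(a,a) > 0} = 1 for every state a *)
        (forall a (p : nat),
           (forall k : nat, (0 < k)%N -> 0 < Qpow Q k a a -> (p %| k)%N) -> p = 1%N)].

(* U_1^N = X_1^N G_N; [U n c] is U_{c+1} (0-indexed column c) *)
Definition U (n c : nat) (w : T) : bool :=
  \big[addb/false]_(r < 2 ^ n) (X (r.+1 : nat)%:Z w && GN n r c).

(* hat K_n at index i = c + 1:  K(U_i | U_1^{i-1}, Y_1^N, S_N, S_0), N = 2^n *)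
Definition Khat (n c : nat) : R :=
  Kcond (U n c)
    (fun w => ([ffun k : 'I_c => U n k w],
               [ffun j : 'I_(2 ^ n) => Y (j.+1 : nat)%:Z w],
               S (2 ^ n : nat)%:Z w, S 0 w)).

Definition psi0 : R := \big[Num.max/0]_(a : St) (Pr (Sev 0 a))^-1.

End FAIM.

From Pilot Require Import Defs.
From HB Require Import structures.
From mathcomp Require Import all_boot all_order all_algebra.
From mathcomp Require Import all_classical all_reals all_analysis.
From mathcomp Require Import ring lra zify.
Import Order.TTheory GRing.Theory Num.Theory.
Set Implicit Arguments. Unset Strict Implicit. Unset Printing Implicit Defensive.

(* Let N = 2^n. Splitting X_1^{2N} into halves, the polar recursion gives
   U^{(n+1)}_{2c} = V_c (+) W_c and U^{(n+1)}_{2c+1} = W_c, where V and W are the length-N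
   transforms of the two halves. Given the middle state S_N, the first half (with S_0) and the
   second half (with S_{2N}) are independent, and by stationarity each has the law of the
   length-N block, so K(V_c | first-half data, S_0, S_N) = K(W_c | second-half data, S_N, S_{2N})
   = K_n; the length-2N observation is a function of both data sets, and coarsening the
   observation can only decrease K. Computed slice by slice in s = S_N, independence factors
   K(V_c (+) W_c | both data, S_N) into sum_s K_A(s) K_B(s) / P(S_N = s), and
   1 / P(S_N = s) <= psi(0) gives psi(0) K_n^2. For the odd index,
   K(W | V (+) W, Q) <= K(V | Q) + K(W | Q) because |a| + |b| <= |a + b| + |a - b|. *)

(** * Recursion of the polar transform *)

Lemma kronG2S n r c :
  kronG2 n.+1 r c = G2 (r %/ 2 ^ n) (c %/ 2 ^ n) && kronG2 n (r %% 2 ^ n) (c %% 2 ^ n).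
Proof. by []. Qed.

Lemma bitrevS n r : bitrev n.+1 r = (r %% 2 * 2 ^ n + bitrev n (r %/ 2))%N.
Proof. by []. Qed.

Lemma divn_expS n z : (z %/ 2 ^ n.+1 = z %/ 2 %/ 2 ^ n)%N.
Proof. by rewrite expnS divnMA. Qed.

Lemma modn_expS_mod2 n z : (z %% 2 ^ n.+1 %% 2 = z %% 2)%N.
Proof. by rewrite modn_dvdm // expnS dvdn_mulr. Qed.

Lemma modn_expS_div2 n z : (z %% 2 ^ n.+1 %/ 2 = z %/ 2 %% 2 ^ n)%N.
Proof. by rewrite modn_divl expnSr. Qed.

Lemma kronG2S_low n x y : (x < 2 ^ n.+1)%N -> (y < 2 ^ n.+1)%N ->
  kronG2 n.+1 x y = G2 (x %% 2) (y %% 2) && kronG2 n (x %/ 2) (y %/ 2).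
Proof.
elim: n x y => [|n IH] x y hx hy; first by rewrite /= !divn1 !modn_small.
rewrite kronG2S IH ?ltn_pmod ?expn_gt0 // (kronG2S n).
by rewrite !divn_expS !modn_expS_mod2 !modn_expS_div2 andbCA.
Qed.

Lemma bitrev_lt n r : (bitrev n r < 2 ^ n)%N.
Proof.
elim: n r => [|n IH] r //; rewrite bitrevS; have := IH (r %/ 2).
by rewrite expnS modn2; case: (odd r); lia.
Qed.

Lemma bitrevS_high n r : (r < 2 ^ n.+1)%N ->
  bitrev n.+1 r = (2 * bitrev n (r %% 2 ^ n) + r %/ 2 ^ n)%N.
Proof.
elim: n r => [|n IH] r hr; first by rewrite /= expn0 divn1 modn_small // muln0 muln1 addn0.
rewrite bitrevS IH; last by rewrite ltn_divLR // -expnSr.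
rewrite (bitrevS n) divn_expS modn_expS_mod2 modn_expS_div2 expnS; lia.
Qed.

Lemma GNS n r k : (r < 2 ^ n.+1)%N -> (k < 2 ^ n.+1)%N ->
  GN n.+1 r k = (k %% 2 <= r %/ 2 ^ n)%N && GN n (r %% 2 ^ n) (k %/ 2).
Proof.
move=> hr hk; have hhigh : (r %/ 2 ^ n < 2)%N by rewrite ltn_divLR ?expn_gt0 // -expnS.
have hlow := bitrev_lt n (r %% 2 ^ n).
rewrite /GN bitrevS_high // kronG2S_low //; last by rewrite expnS; lia.
by rewrite mulnC modnMDl divnMDl // (modn_small hhigh) (divn_small hhigh) addn0.
Qed.

Definition polar (n : nat) (x : nat -> bool) (c : nat) : bool :=
  \big[addb/false]_(r < 2 ^ n) (x r && GN n r c).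

Lemma polarS n x k : (k < 2 ^ n.+1)%N ->
  polar n.+1 x k = (~~ odd k && polar n x k./2) (+) polar n (fun r => x (2 ^ n + r)%N) k./2.
Proof.
move=> hk; have hN : (2 ^ n.+1 = 2 ^ n + 2 ^ n)%N by rewrite expnS mul2n addnn.
rewrite /polar hN big_split_ord /=; congr addb.
  have -> : \big[addb/false]_(r < 2 ^ n) (x r && GN n.+1 r k) =
            \big[addb/false]_(r < 2 ^ n) (~~ odd k && (x r && GN n r k./2)).
    apply: eq_bigr => r _; have hr := ltn_ord r.
    rewrite GNS ?hk ?hN ?ltn_addr // (divn_small hr) (modn_small hr) modn2 divn2.
    by case: (odd k); rewrite //= andbF.
  by case: (odd k) => //=; rewrite big1.
apply: eq_bigr => r _; have hr := ltn_ord r.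
rewrite GNS ?hk ?hN ?ltn_add2l // divnDl ?dvdnn // divnn expn_gt0 (divn_small hr).
by rewrite modnDl (modn_small hr) modn2 divn2 leq_b1.
Qed.

Local Open Scope ring_scope.

(** * The K functional of a finite mass function *)

Section Kfunctional.
Variable R : realFieldType.

Lemma sum_pairE (I J : finType) (F : I * J -> R) : \sum_p F p = \sum_i \sum_j F (i, j).
Proof. by rewrite pair_bigA; apply: eq_bigr => -[]. Qed.

Lemma normD_le_normDB (a b : R) : `|a| + `|b| <= `|a + b| + `|a - b|.
Proof.
have ha : `|a *+ 2| <= `|a + b| + `|a - b|.
  by rewrite (_ : a *+ 2 = (a + b) + (a - b)) ?ler_normD // mulr2n; ring.
have hb : `|b *+ 2| <= `|a + b| + `|a - b|.
  by rewrite (_ : b *+ 2 = (a + b) - (a - b)) ?ler_normB // mulr2n; ring.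
rewrite !normrMn !mulr2n in ha hb; lra.
Qed.

(* [(-1) ^+ u o] weighs [u o = false] by 1 and [u o = true] by -1: for the law [mu] of a
   sample, each inner sum is P(U = 0, Q = x) - P(U = 1, Q = x). *)
Definition Kmass (Om Q : finType) (mu : Om -> R) (u : Om -> bool) (q : Om -> Q) : R :=
  \sum_x `| \sum_(o | q o == x) (-1) ^+ u o * mu o |.

Variables (Om : finType) (mu : Om -> R).

Lemma Kmass_comp_le (Q Q' : finType) u (q : Om -> Q) (h : Q -> Q') :
  Kmass mu u (fun o => h (q o)) <= Kmass mu u q.
Proof.
set F := fun o => (-1) ^+ u o * mu o.
have fiber y : \sum_(o | h (q o) == y) F o = \sum_(x | h x == y) \sum_(o | q o == x) F o.
  rewrite (partition_big q (fun x => h x == y)) //; apply: eq_bigr => x /eqP hx.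
  by apply: eq_bigl => o; rewrite andbC; case: eqP => // ->; rewrite hx eqxx.
rewrite /Kmass (partition_big h xpredT) //=; apply: ler_sum => y _.
by rewrite fiber ler_norm_sum.
Qed.

Lemma Kmass_comp_can (Q Q' : finType) u (q : Om -> Q) (h : Q -> Q') (h' : Q' -> Q) :
  cancel h h' -> Kmass mu u (fun o => h (q o)) = Kmass mu u q.
Proof.
move=> hK; apply/eqP; rewrite eq_le Kmass_comp_le /=.
rewrite {1}(_ : q = fun o => h' (h (q o))); first exact: (Kmass_comp_le u (fun o => h (q o))).
by apply: boolp.funext => o; rewrite hK.
Qed.

Lemma Kmass_xor_le (Q : finType) (v w : Om -> bool) (q : Om -> Q) :
  Kmass mu w (fun o => (v o (+) w o, q o)) <= Kmass mu v q + Kmass mu w q.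
Proof.
rewrite /Kmass sum_pairE exchange_big -big_split /=; apply: ler_sum => x _.
pose alpha t := \sum_(o | (q o == x) && (v o (+) w o == t)) (-1) ^+ v o * mu o.
have split_xor (F : Om -> R) : \sum_(o | q o == x) F o =
    \sum_t \sum_(o | (q o == x) && (v o (+) w o == t)) F o.
  exact: partition_big.
have fiber_pair t (F : Om -> R) : \sum_(o | (v o (+) w o, q o) == (t, x)) F o =
    \sum_(o | (q o == x) && (v o (+) w o == t)) F o.
  by apply: eq_bigl => o; rewrite xpair_eqE andbC.
have beta t : \sum_(o | (q o == x) && (v o (+) w o == t)) (-1) ^+ w o * mu o =
    (-1) ^+ t * alpha t.
  rewrite mulr_sumr; apply: eq_bigr => o /andP [_ /eqP <-].
  by rewrite -{1}(addKb (v o) (w o)) signr_addb mulrCA mulrA.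
rewrite big_bool !fiber_pair !split_xor !big_bool !beta !normrMsign /= expr0 expr1 mul1r mulN1r.
by rewrite addrC (addrC (alpha true)) (addrC (- _)) normD_le_normDB.
Qed.

End Kfunctional.

(** * K under conditional independence *)

Section ConditionalIndependence.
Variables (R : realFieldType) (A St B : finType) (mu : A * St * B -> R).
Hypothesis mu_ge0 : forall o, 0 <= mu o.

Definition muA g s := \sum_f mu (g, s, f).
Definition muB s f := \sum_g mu (g, s, f).
Definition muS s := \sum_g muA g s.

(* Conditional independence of the A- and B-coordinates given the St-coordinate, in product
   form so that it is meaningful when [muS s = 0]. *)
Hypothesis mu_indep : forall g s f, mu (g, s, f) * muS s = muA g s * muB s f.

Lemma muS_ge0 s : 0 <= muS s.
Proof. by do 2![apply: sumr_ge0 => ? _]. Qed.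

Lemma muA_muS_eq0 g s : muS s = 0 -> muA g s = 0.
Proof. by move=> hS; apply: (psumr_eq0P _ hS) => // g' _; apply: sumr_ge0. Qed.

Lemma mu_muS_eq0 g s f : muS s = 0 -> mu (g, s, f) = 0.
Proof. by move=> /(muA_muS_eq0 g) hA; apply: (psumr_eq0P _ hA). Qed.

Lemma muB_muS_eq0 s f : muS s = 0 -> muB s f = 0.
Proof. by move=> hS; apply: big1 => g _; apply: mu_muS_eq0. Qed.

Lemma mu_factor g s f : mu (g, s, f) = muA g s * muB s f / muS s.
Proof.
have [hS|hS] := eqVneq (muS s) 0; last by rewrite -mu_indep mulfK.
by rewrite hS invr0 mulr0 mu_muS_eq0.
Qed.

Lemma sum_slice (P1 : pred A) (P3 : pred B) s (F : A * St * B -> R) :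
  \sum_(o | [&& P1 o.1.1, o.1.2 == s & P3 o.2]) F o =
  \sum_(g | P1 g) \sum_(f | P3 f) F (g, s, f).
Proof.
rewrite big_mkcond sum_pairE sum_pairE [RHS]big_mkcond; apply: eq_bigr => g _.
rewrite (bigD1 s) //= [X in _ + X]big1 ?addr0; last first.
  by move=> s' /negbTE hs; apply: big1 => f _; rewrite hs andbF.
by rewrite eqxx; case: (P1 g); rewrite /= ?big1_eq // -big_mkcond.
Qed.

Variables (Qa Qb : finType) (a : A -> Qa) (b : B -> Qb).

Definition obsA (o : A * St * B) := (a o.1.1, o.1.2).
Definition obsB (o : A * St * B) := (b o.2, o.1.2).
Definition obsAB (o : A * St * B) := (a o.1.1, o.1.2, b o.2).

Definition sliceA (v : A -> bool) s x := \sum_(g | a g == x) (-1) ^+ v g * muA g s.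
Definition sliceB (w : B -> bool) s y := \sum_(f | b f == y) (-1) ^+ w f * muB s f.
Definition KA v s := \sum_x `|sliceA v s x|.
Definition KB w s := \sum_y `|sliceB w s y|.

Lemma Kmass_obsA v : Kmass mu (fun o => v o.1.1) obsA = \sum_s KA v s.
Proof.
rewrite /Kmass sum_pairE exchange_big; apply: eq_bigr => s _; apply: eq_bigr => x _.
rewrite (eq_bigl (fun o => [&& a o.1.1 == x, o.1.2 == s & xpredT o.2])) => [|o]; last first.
  by rewrite xpair_eqE andbT.
rewrite (sum_slice (fun g => a g == x) xpredT) /sliceA; congr `|_|.
by apply: eq_bigr => g _; rewrite /muA mulr_sumr.
Qed.

Lemma Kmass_obsB w : Kmass mu (fun o => w o.2) obsB = \sum_s KB w s.
Proof.
rewrite /Kmass sum_pairE exchange_big; apply: eq_bigr => s _; apply: eq_bigr => y _.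
rewrite (eq_bigl (fun o => [&& xpredT o.1.1, o.1.2 == s & b o.2 == y])) => [|o]; last first.
  by rewrite xpair_eqE andbC.
rewrite (sum_slice xpredT (fun f => b f == y)) exchange_big /sliceB; congr `|_|.
by apply: eq_bigr => f _; rewrite /muB mulr_sumr.
Qed.

Lemma sum_obsAB v w x s y :
  \sum_(o | obsAB o == (x, s, y)) (-1) ^+ (v o.1.1 (+) w o.2) * mu o =
  sliceA v s x * sliceB w s y / muS s.
Proof.
rewrite (eq_bigl (fun o => [&& a o.1.1 == x, o.1.2 == s & b o.2 == y])) => [|o]; last first.
  by rewrite !xpair_eqE andbA.
rewrite (sum_slice (fun g => a g == x) (fun f => b f == y)) /sliceA /sliceB !mulr_suml.
apply: eq_bigr => g _.
rewrite mulr_sumr mulr_suml; apply: eq_bigr => f _.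
by rewrite signr_addb mu_factor; ring.
Qed.

Lemma Kmass_obsAB v w :
  Kmass mu (fun o => v o.1.1 (+) w o.2) obsAB = \sum_s KA v s * KB w s / muS s.
Proof.
rewrite /Kmass sum_pairE sum_pairE exchange_big; apply: eq_bigr => s _.
have hinv : 0 <= (muS s)^-1 by rewrite invr_ge0 muS_ge0.
rewrite /KA /KB -(ger0_norm hinv) mulr_suml mulr_suml.
apply: eq_bigr => x _; rewrite mulr_sumr mulr_suml; apply: eq_bigr => y _.
by rewrite sum_obsAB !normrM.
Qed.

Lemma KA_false s : KA (fun _ => false) s = muS s.
Proof.
rewrite /KA /muS (partition_big a xpredT) //=; apply: eq_bigr => x _.
rewrite ger0_norm; first by apply: eq_bigr => g _; rewrite mul1r.
by apply: sumr_ge0 => g _; rewrite mul1r sumr_ge0.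
Qed.

Lemma KB_false s : KB (fun _ => false) s = muS s.
Proof.
rewrite /KB /muS exchange_big (partition_big b xpredT) //=; apply: eq_bigr => y _.
rewrite ger0_norm; first by apply: eq_bigr => f _; rewrite mul1r.
by apply: sumr_ge0 => f _; rewrite mul1r sumr_ge0.
Qed.

Lemma KA_muS_eq0 v s : muS s = 0 -> KA v s = 0.
Proof.
move=> hS; apply: big1 => x _; rewrite /sliceA big1 ?normr0 // => g _.
by rewrite muA_muS_eq0 ?mulr0.
Qed.

Lemma KB_muS_eq0 w s : muS s = 0 -> KB w s = 0.
Proof.
move=> hS; apply: big1 => y _; rewrite /sliceB big1 ?normr0 // => f _.
by rewrite muB_muS_eq0 ?mulr0.
Qed.

Lemma Kmass_obsAB_A v : Kmass mu (fun o => v o.1.1) obsAB = Kmass mu (fun o => v o.1.1) obsA.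
Proof.
transitivity (Kmass mu (fun o => v o.1.1 (+) (fun _ : B => false) o.2) obsAB).
  by congr Kmass; apply: boolp.funext => o; rewrite addbF.
rewrite (Kmass_obsAB v (fun _ => false)) Kmass_obsA; apply: eq_bigr => s _; rewrite KB_false.
have [hS|hS] := eqVneq (muS s) 0; last by rewrite mulfK.
by rewrite KA_muS_eq0 // !mul0r.
Qed.

Lemma Kmass_obsAB_B w : Kmass mu (fun o => w o.2) obsAB = Kmass mu (fun o => w o.2) obsB.
Proof.
rewrite [LHS](Kmass_obsAB (fun _ => false) w) Kmass_obsB; apply: eq_bigr => s _; rewrite KA_false.
have [hS|hS] := eqVneq (muS s) 0; last by rewrite mulrAC mulfV ?mul1r.
by rewrite KB_muS_eq0 // !mulr0 mul0r.
Qed.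

Lemma Kmass_obsAB_le v w psi : (forall s, (muS s)^-1 <= psi) ->
  Kmass mu (fun o => v o.1.1 (+) w o.2) obsAB <=
  psi * (Kmass mu (fun o => v o.1.1) obsA * Kmass mu (fun o => w o.2) obsB).
Proof.
move=> hpsi; rewrite Kmass_obsAB Kmass_obsA Kmass_obsB mulrCA mulr_suml.
apply: ler_sum => s _; rewrite -mulrA ler_wpM2l ?sumr_ge0 // mulrC.
apply: ler_pM; rewrite ?invr_ge0 ?muS_ge0 ?sumr_ge0 //.
rewrite (bigD1 s) //= lerDl; apply: sumr_ge0 => s' _; exact: sumr_ge0.
Qed.

End ConditionalIndependence.

Local Open Scope classical_set_scope.

(** * Laws of finite-valued random variables *)

Section Pushforward.
Context d (T : measurableType d) (R : realType) (P : probability T R).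

Definition measurable_fibers (Om : finType) (F : T -> Om) :=
  forall o, measurable [set w | F w = o].

Definition mass (Om : finType) (F : T -> Om) (o : Om) : R := Pr P [set w | F w = o].

Lemma mass_ge0 (Om : finType) (F : T -> Om) o : 0 <= mass F o.
Proof. exact/fine_ge0/measure_ge0. Qed.

Section Fibers.
Variables (Om : finType) (F : T -> Om).
Hypothesis mF : measurable_fibers F.

Lemma Pr_fibers_seq (s : seq Om) : uniq s ->
  measurable [set w | F w \in s] /\ Pr P [set w | F w \in s] = \sum_(o <- s) mass F o.
Proof.
elim: s => [_|o s IH /= /andP [os us]].
  have -> : [set w | F w \in [::]] = set0 by apply/seteqP; split.
  by rewrite big_nil /Pr measure0.
have [ms Ps] := IH us.
have -> : [set w | F w \in o :: s] = [set w | F w = o] `|` [set w | F w \in s].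
  apply/seteqP; split => w /=; rewrite in_cons; first by case/orP => [/eqP|]; [left|right].
  by case=> [->|->]; rewrite ?eqxx ?orbT.
split; first exact: measurableU.
rewrite big_cons /Pr measureU //; last first.
  by apply/seteqP; split => w //= [Fo Fs]; move: os; rewrite -Fo Fs.
by rewrite fineD ?fin_num_measure // -Ps.
Qed.

Let preimage_enum (E : pred Om) : [set w | E (F w)] = [set w | F w \in enum E].
Proof. by apply/seteqP; split => w /=; rewrite mem_enum. Qed.

Lemma Pr_preimage (E : pred Om) : Pr P [set w | E (F w)] = \sum_(o | E o) mass F o.
Proof. by rewrite preimage_enum; case: (Pr_fibers_seq (enum_uniq E)) => _ ->; exact: big_enum. Qed.

Lemma Kcond_mass (Q : finType) (u : Om -> bool) (q : Om -> Q) :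
  Kcond P (fun w => u (F w)) (fun w => q (F w)) = Kmass (mass F) u q.
Proof.
rewrite /Kcond /Kmass; apply: eq_bigr => x _; congr `|_|.
have fiber b : [set w | u (F w) = b /\ q (F w) = x] =
    [set w | (fun o => (q o == x) && (u o == b)) (F w)].
  by apply/seteqP; split => w /= => [[-> ->]|/andP [/eqP -> /eqP ->]]; rewrite ?eqxx.
rewrite !fiber (Pr_preimage (fun o => (q o == x) && (u o == false))).
rewrite (Pr_preimage (fun o => (q o == x) && (u o == true))) [RHS](bigID u) /= [RHS]addrC.
congr (_ + _).
  by apply: eq_big => o; rewrite ?eqbF_neg // => /andP [_ /negbTE ->]; rewrite expr0 mul1r.
by rewrite -sumrN; apply: eq_big => o; rewrite ?eqb_id // => /andP [_ ->]; rewrite /= expr1 mulN1r.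
Qed.

Lemma Kcond_mass_eq (Q : finType) (u : T -> bool) (q : T -> Q) (u' : Om -> bool) (q' : Om -> Q) :
  (forall w, u w = u' (F w)) -> (forall w, q w = q' (F w)) ->
  Kcond P u q = Kmass (mass F) u' q'.
Proof. by move=> hu hq; rewrite (boolp.funext hu) (boolp.funext hq) Kcond_mass. Qed.

End Fibers.

Lemma measurable_fibers_pair (O1 O2 : finType) (F1 : T -> O1) (F2 : T -> O2) :
  measurable_fibers F1 -> measurable_fibers F2 -> measurable_fibers (fun w => (F1 w, F2 w)).
Proof.
move=> m1 m2 [ o1 o2 ]; rewrite (_ : [set w | _] = [set w | F1 w = o1] `&` [set w | F2 w = o2]).
  exact: measurableI.
by apply/seteqP; split => w /= => [[-> ->]|[-> ->]].
Qed.

Lemma measurable_fibers_ffun m (Om : finType) (F : 'I_m -> T -> Om) :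
  (forall i, measurable_fibers (F i)) -> measurable_fibers (fun w => [ffun i => F i w]).
Proof.
move=> mF f; rewrite (_ : [set w | _] = \bigcap_(i in setT) [set w | F i w = f i]).
  by apply: fin_bigcap_measurable => [|i _]; [exact: finite_finset | exact: mF].
apply/seteqP; split => w /= => [<- i _|Hw]; first by rewrite ffunE.
by apply/ffunP => i; rewrite ffunE Hw.
Qed.

End Pushforward.

(** * The two halves of a block of length 2N *)

Definition swap_last (A B : Type) (p : A * B * B) : A * B * B := (p.1.1, p.2, p.1.2).

Lemma swap_lastK (A B : Type) : involutive (@swap_last A B).
Proof. by case=> [[]]. Qed.

Lemma exp2_gt0 n : (0 < 2 ^ n)%N.
Proof. by rewrite expn_gt0. Qed.

Lemma exp2_pred_lt n : ((2 ^ n).-1 < 2 ^ n)%N.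
Proof. by rewrite ltn_predL exp2_gt0. Qed.

Section Blocks.
Context d (T : measurableType d) (R : realType) (P : probability T R) (Yt St : finType)
  (X : int -> T -> bool) (Y : int -> T -> Yt) (S : int -> T -> St).

Local Notation Z := (bool * Yt * St)%type.

Definition window (k : int) (m : nat) (w : T) : {ffun 'I_m -> Z} :=
  [ffun l : 'I_m => Defs.Zp X Y S (k + (l : nat)%:Z) w].

Lemma window_ev k m f : [set w | window k m w = f] = win_ev X Y S k f.
Proof.
apply/seteqP; split => w /= => [<- l|hw]; first by rewrite ffunE.
by apply/ffunP => l; rewrite ffunE hw.
Qed.

Definition tail m (om : {ffun 'I_m.+1 -> Z}) : {ffun 'I_m -> Z} :=
  [ffun r => om (lift ord0 r)].

Lemma window_tail k m w : tail (window k m.+1 w) = window (k + 1) m w.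
Proof. by apply/ffunP => r; rewrite !ffunE lift0 /= -addrA -PoszD add1n. Qed.

Variable n : nat.
Local Notation N := (2 ^ n)%N.

Definition first_idx : 'I_N := Ordinal (exp2_gt0 n).
Definition last_idx : 'I_N := Ordinal (exp2_pred_lt n).

(* [block1 w l] is (X_{l+1}, Y_{l+1}, S_l), the format of [past_ev]; windows carry
   (X_j, Y_j, S_j). *)
Definition block1 (w : T) : {ffun 'I_N -> Z} :=
  [ffun l : 'I_N => (X (l.+1 : nat)%:Z w, Y (l.+1 : nat)%:Z w, S (l : nat)%:Z w)].
Definition block2 (w : T) : {ffun 'I_N -> Z} := window N.+1%:Z N w.
Definition sample (w : T) := (block1 w, S N%:Z w, block2 w).

Definition blockU c (g : {ffun 'I_N -> Z}) : bool :=
  \big[addb/false]_(r < N) ((g r).1.1 && GN n r c).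

Definition obs_init c (g : {ffun 'I_N -> Z}) :=
  ([ffun k : 'I_c => blockU k g], [ffun j : 'I_N => (g j).1.2], (g first_idx).2).
Definition obs_final c (g : {ffun 'I_N -> Z}) :=
  ([ffun k : 'I_c => blockU k g], [ffun j : 'I_N => (g j).1.2], (g last_idx).2).

Lemma U_polar m c w : U X m c w = polar m (fun r => X (r.+1 : nat)%:Z w) c.
Proof. by []. Qed.

Lemma U_block1 c w : U X n c w = blockU c (block1 w).
Proof. by apply: eq_bigr => r _; rewrite ffunE. Qed.

Lemma U_double k w : (k < 2 ^ n.+1)%N ->
  U X n.+1 k w = (~~ odd k && blockU k./2 (block1 w)) (+) blockU k./2 (block2 w).
Proof.
move=> hk; rewrite U_polar polarS // -U_polar U_block1; congr addb.
by apply: eq_bigr => r _; rewrite ffunE /Defs.Zp /= -PoszD addSn.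
Qed.

Lemma blockU_window1 c w : blockU c (window 1 N w) = U X n c w.
Proof. by apply: eq_bigr => r _; rewrite ffunE /Defs.Zp /= -PoszD add1n. Qed.

Definition interleave c (p1 p2 : {ffun 'I_c -> bool}) (k : nat) : bool :=
  (~~ odd k && nth false (fgraph p1) k./2) (+) nth false (fgraph p2) k./2.

Definition concat (y1 y2 : {ffun 'I_N -> Yt}) (j : nat) : Yt :=
  nth (y1 first_idx) (fgraph y1 ++ fgraph y2) j.

(* The observation of [Khat n.+1 k], k <= 2c+1, rebuilt from the data of both blocks: [t]
   stands for U_{2c}, and [y1 first_idx] is only a default value for [nth]. *)
Definition merge_obs m c (t : bool)
    (p : ({ffun 'I_c -> bool} * {ffun 'I_N -> Yt} * St) * St *
         ({ffun 'I_c -> bool} * {ffun 'I_N -> Yt} * St)) :=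
  ([ffun k : 'I_m => if (k < c.*2)%N then interleave p.1.1.1.1 p.2.1.1 k else t],
   [ffun j : 'I_(2 ^ n.+1) => concat p.1.1.1.2 p.2.1.2 j], p.2.2, p.1.1.2).

Lemma Khat_obs_merge m c t w : (c < N)%N -> (m <= c.*2.+1)%N ->
  ((c.*2 < m)%N -> t = U X n.+1 c.*2 w) ->
  ([ffun k : 'I_m => U X n.+1 k w], [ffun j : 'I_(2 ^ n.+1) => Y (j.+1 : nat)%:Z w],
   S (2 ^ n.+1 : nat)%:Z w, S 0 w) =
  @merge_obs m c t (obsAB (obs_init c) (obs_final c) (sample w)).
Proof.
move=> hc hm ht; have hN : (2 ^ n.+1 = N + N)%N by rewrite expnS mul2n addnn.
congr (_, _, _, _).
- apply/ffunP => k; rewrite !ffunE; case: ltnP => hk; last first.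
    have hkm := ltn_ord k; rewrite -!muln2 in hk hm *.
    have ek : (k : nat) = (c * 2)%N by lia.
    by rewrite ek ht // -muln2; lia.
  have hk2 : (k./2 < c)%N by rewrite ltn_half_double.
  rewrite U_double ?hN; last by lia.
  by rewrite /interleave /= -[k./2]/(nat_of_ord (Ordinal hk2)) !nth_fgraph_ord !ffunE.
- apply/ffunP => j; rewrite !ffunE /concat /= nth_cat size_tuple card_ord.
  case: ltnP => hj; first by rewrite -[j : nat]/(nat_of_ord (Ordinal hj)) nth_fgraph_ord !ffunE.
  have hj2 : (j < N + N)%N by rewrite -hN.
  have hj' : (j - N < N)%N by lia.
  rewrite -[(j - N)%N]/(nat_of_ord (Ordinal hj')) nth_fgraph_ord !ffunE /Defs.Zp /=.
  by congr (Y _ w); lia.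
- by rewrite /= ffunE /Defs.Zp /=; congr (S _ w); rewrite hN; lia.
- by rewrite /= ffunE.
Qed.

Lemma past_ev_block1 (g : {ffun 'I_N -> Z}) :
  past_ev X Y S N.+1%:Z g = [set w | block1 w = g].
Proof.
have et (l : nat) : N.+1%:Z - N%:Z + l%:Z = (l.+1 : nat)%:Z by lia.
have et1 (l : nat) : (l.+1 : nat)%:Z - 1 = l%:Z by lia.
apply/seteqP; split => w /= => [hw|<- l]; last by rewrite ffunE /= et et1.
by apply/ffunP => l; have := hw l; rewrite ffunE /= et et1.
Qed.

Lemma Sev_middle s : Sev S (N.+1%:Z - 1) s = [set w | S N%:Z w = s].
Proof. by rewrite /Sev (_ : _ - 1 = N%:Z) //; lia. Qed.

Section FAIMAssumptions.
Hypotheses (mX : forall j b, measurable [set w | X j w = b])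
  (mY : forall j y, measurable [set w | Y j w = y])
  (mS : forall j s, measurable [set w | S j w = s]).

Lemma measurable_fibers_window k m : measurable_fibers (window k m).
Proof.
apply: measurable_fibers_ffun => l; apply: measurable_fibers_pair => //.
exact: measurable_fibers_pair.
Qed.

Lemma measurable_fibers_sample : measurable_fibers sample.
Proof.
apply: measurable_fibers_pair; last exact: measurable_fibers_window.
apply: measurable_fibers_pair => //; apply: measurable_fibers_ffun => l.
by apply: measurable_fibers_pair => //; apply: measurable_fibers_pair.
Qed.

Lemma Khat_block1 c :
  Khat P X Y S n c = Kmass (mass P sample) (fun o => blockU c o.1.1) (obsA (obs_init c)).
Proof.
rewrite -(Kmass_comp_can _ _ _ (@swap_lastK _ _)) /Khat.
apply: (Kcond_mass_eq P measurable_fibers_sample) => w; first exact: U_block1.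
rewrite /swap_last /obsA /obs_init /= ffunE; congr (_, _, _, _).
  by apply/ffunP => k; rewrite !ffunE U_block1.
by apply/ffunP => j; rewrite !ffunE.
Qed.

Lemma Pr_sample_slice (A : set T) (P1 P3 : pred {ffun 'I_N -> Z}) s :
  (forall w, A w <-> [/\ P1 (block1 w), S N%:Z w = s & P3 (block2 w)]) ->
  Pr P A = \sum_(g | P1 g) \sum_(f | P3 f) mass P sample (g, s, f).
Proof.
move=> hA; rewrite -(sum_slice _ _ _ (mass P sample)).
rewrite -Pr_preimage; last exact: measurable_fibers_sample.
congr Pr; apply/seteqP; split => w /=; first by move/hA => [-> -> ->]; rewrite eqxx.
by case/and3P => h1 /eqP h2 h3; apply/hA.
Qed.

Hypothesis cond_indep : forall (j : int) (m1 m2 : nat) (f : 'I_m1 -> Z) (g : 'I_m2 -> Z) (s : St),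
  Pr P (win_ev X Y S j f `&` past_ev X Y S j g `&` Sev S (j - 1) s) * Pr P (Sev S (j - 1) s)
  = Pr P (win_ev X Y S j f `&` Sev S (j - 1) s) * Pr P (past_ev X Y S j g `&` Sev S (j - 1) s).

Lemma mass_sample_indep g s f :
  mass P sample (g, s, f) * muS (mass P sample) s =
  muA (mass P sample) g s * muB (mass P sample) s f.
Proof.
have := cond_indep N.+1%:Z f g s; rewrite past_ev_block1 -window_ev Sev_middle.
rewrite (@Pr_sample_slice _ (pred1 g) (pred1 f) s); last first.
  by move=> w /=; rewrite /block2; split=> [[[-> ->] ->]|[/eqP -> -> /eqP ->]]; rewrite ?eqxx.
rewrite (@Pr_sample_slice _ xpredT xpredT s); last by move=> w; split=> [->|[]].
rewrite (@Pr_sample_slice _ xpredT (pred1 f) s); last first.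
  by move=> w /=; rewrite /block2; split=> [[-> ->]|[_ -> /eqP ->]]; rewrite ?eqxx.
rewrite (@Pr_sample_slice _ (pred1 g) xpredT s); last first.
  by move=> w /=; split=> [[-> ->]|[/eqP -> -> _]]; rewrite ?eqxx.
rewrite !big_pred1_eq => ->; rewrite mulrC; congr (_ * _).
by apply: eq_bigr => g' _; exact: big_pred1_eq.
Qed.

Lemma Khat_even c : (c < N)%N ->
  Khat P X Y S n.+1 c.*2 <= Kmass (mass P sample)
    (fun o => blockU c o.1.1 (+) blockU c o.2) (obsAB (obs_init c) (obs_final c)).
Proof.
move=> hc; rewrite /Khat (Kcond_mass_eq P measurable_fibers_sample
  (u' := fun o => blockU c o.1.1 (+) blockU c o.2)
  (q' := fun o => @merge_obs c.*2 c false (obsAB (obs_init c) (obs_final c) o))) => [|w|w].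
- exact: Kmass_comp_le.
- by rewrite U_double ?odd_double ?doubleK // expnS mul2n ltn_double.
- by apply: Khat_obs_merge; rewrite ?leqnSn ?ltnn.
Qed.

Lemma Khat_odd c : (c < N)%N ->
  Khat P X Y S n.+1 c.*2.+1 <= Kmass (mass P sample) (fun o => blockU c o.2)
    (fun o => (blockU c o.1.1 (+) blockU c o.2, obsAB (obs_init c) (obs_final c) o)).
Proof.
move=> hc; have hc2 : (c.*2 < 2 ^ n.+1)%N by rewrite expnS mul2n ltn_double.
rewrite /Khat (Kcond_mass_eq P measurable_fibers_sample
  (u' := fun o => blockU c o.2) (q' := fun o => @merge_obs c.*2.+1 c
    (blockU c o.1.1 (+) blockU c o.2) (obsAB (obs_init c) (obs_final c) o))) => [|w|w].
- exact: (Kmass_comp_le _ _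
    (fun o => (blockU c o.1.1 (+) blockU c o.2, obsAB (obs_init c) (obs_final c) o))
    (fun p => @merge_obs c.*2.+1 c p.1 p.2)).
- by rewrite U_double /= ?odd_double ?uphalf_double // expnS mul2n ltn_Sdouble.
- by apply: Khat_obs_merge => // _; rewrite U_double ?odd_double ?doubleK.
Qed.

Hypothesis stationary : forall (k : int) (m : nat) (f : 'I_m -> Z),
  Pr P (win_ev X Y S k f) = Pr P (win_ev X Y S 0 f).

Lemma mass_window_shift k m : mass P (window k m) = mass P (window 0 m).
Proof. by apply: boolp.funext => f; rewrite /mass !window_ev stationary. Qed.

Lemma tail_window_block2 w : tail (window N%:Z N.+1 w) = block2 w.
Proof. by rewrite window_tail -PoszD addn1. Qed.

Lemma Khat_block2 c :
  Khat P X Y S n c = Kmass (mass P sample) (fun o => blockU c o.2) (obsB (obs_final c)).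
Proof.
pose u' (om : {ffun 'I_N.+1 -> Z}) := blockU c (tail om).
pose q' (om : {ffun 'I_N.+1 -> Z}) := (obs_final c (tail om), (om ord0).2).
transitivity (Kmass (mass P (window 0 N.+1)) u' q').
  rewrite /Khat; apply: (Kcond_mass_eq P (@measurable_fibers_window _ _)) => w;
    rewrite /u' /q' window_tail add0r ?blockU_window1 //.
  rewrite /obs_final /= !ffunE; congr (_, _, _, _).
  - by apply/ffunP => k; rewrite !ffunE blockU_window1.
  - by apply/ffunP => j; rewrite !ffunE /Defs.Zp /= -PoszD add1n.
  - by rewrite /Defs.Zp /= -PoszD add1n prednK ?exp2_gt0.
(* Stationarity moves the window S_0 .. S_N onto S_N .. S_{2N}. *)
rewrite -(mass_window_shift N%:Z).
rewrite -(Kcond_mass_eq P (@measurable_fibers_window _ _) (u := fun w => blockU c (block2 w))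
  (q := fun w => (obs_final c (block2 w), S N%:Z w))) => [|w|w].
- exact: (Kcond_mass_eq P measurable_fibers_sample).
- by rewrite /u' tail_window_block2.
- by rewrite /q' tail_window_block2 ffunE /Defs.Zp /= addr0.
Qed.

Hypothesis state_stationary : forall (k : int) (a : St), Pr P (Sev S k a) = Pr P (Sev S 0 a).

Lemma muS_inv_le_psi0 s : (muS (mass P sample) s)^-1 <= psi0 P S.
Proof.
have -> : muS (mass P sample) s = Pr P (Sev S N%:Z s).
  by symmetry; apply: Pr_sample_slice => w; split=> [->|[]].
by rewrite state_stationary; apply: (le_bigmax _ (fun a => (Pr P (Sev S 0 a))^-1)).
Qed.

Lemma Khat_step c : (c < N)%N ->
  Khat P X Y S n.+1 c.*2 <= psi0 P S * Khat P X Y S n c ^+ 2 /\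
  Khat P X Y S n.+1 c.*2.+1 <= 2 * Khat P X Y S n c.
Proof.
move=> hc; have mu_ge0 := mass_ge0 P sample.
split.
- rewrite expr2 {1}Khat_block1 Khat_block2; apply: le_trans (Khat_even hc) _.
  exact: (Kmass_obsAB_le mu_ge0 mass_sample_indep _ _ (blockU c) (blockU c) muS_inv_le_psi0).
- apply: le_trans (Khat_odd hc) _; apply: le_trans (Kmass_xor_le _ _ _ _) _.
  rewrite (Kmass_obsAB_A mu_ge0 mass_sample_indep) (Kmass_obsAB_B mu_ge0 mass_sample_indep).
  rewrite -Khat_block1 -Khat_block2; lra.
Qed.

End FAIMAssumptions.

End Blocks.

(* i_n - 1 = c (0-indexed), so i_{n+1} - 1 = 2c + B_{n+1}. *)
Theorem proposition2 (d : measure_display) (T : measurableType d) (R : realType)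
  (P : probability T R) (Yt St : finType)
  (X : int -> T -> bool) (Y : int -> T -> Yt) (S : int -> T -> St) :
  FAIM P X Y S -> state_chain P S ->
  forall n : nat, (1 <= n)%N -> forall c : nat, (c < 2 ^ n)%N ->
    Khat P X Y S n.+1 c.*2 <= psi0 P S * Khat P X Y S n c ^+ 2 /\
    Khat P X Y S n.+1 c.*2.+1 <= 2 * Khat P X Y S n c.
Proof.
case=> [[mX mY mS] stationary _ cond_indep] [state_stationary _] n _ c.
exact: Khat_step.
Qed.
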